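(* Let $\Theta$ be a branch of a tableau of $\mathbf{TAB}_{\mathbf{IB}}$, let $N^\Theta$ be the set of nominals occurring in $\Theta$, and let $\prec_\Theta$ be the generation relation on $N^\Theta$. Then the structure $G=(N^\Theta,\prec_\Theta)$ is a finite set of well-founded and finitely branching trees.
   Context: Hybrid language: fix disjoint countably infinite sets $\mathbf{Prop}$ (propositional variables) and $\mathbf{Nom}$ (nominals). Formulas: $\varphi ::= p \mid i \mid \neg\varphi \mid \varphi\land\varphi \mid \Diamond\varphi \mid @_i\varphi$ with $p\in\mathbf{Prop}$, $i\in\mathbf{Nom}$; $\Box\varphi$ abbreviates $\neg\Diamond\neg\varphi$. Tableau calculus $\mathbf{TAB}_{\mathbf{IB}}$. A tableau is a well-founded tree whose nodes are formulas of the form $@_i\varphi$; its root is a formula $@_i\varphi$ (the root formula) where $i$ does not occur in $\varphi$. A branch is a maximal path; $\varphi\in\Theta$ means $\varphi$ occurs on branch $\Theta$. Each branch is extended by applying the rules below to its formulas as often as possible, except that no further formula is added to a branch once either (i) every new formula generated by applying any rule already occurs on the branch, or (ii) the branch is closed, i.e. contains $@_i\varphi$ and $@_i\neg\varphi$ for some formula $\varphi$ and nominal $i$. An accessibility formula is a formula $@_i\Diamond j$ added by rule $[\Diamond]$ (with $j$ the new nominal). Rules (premises already on the branch; conclusions added to it): [$\neg\neg$] from $@_i\neg\neg\varphi$ add $@_i\varphi$; [$\land$] from $@_i(\varphi\land\psi)$ add $@_i\varphi$ and $@_i\psi$; [$\neg\land$] from $@_i\neg(\varphi\land\psi)$ split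 the branch into one extended by $@_i\neg\varphi$ and one extended by $@_i\neg\psi$; [$\Diamond$] from $@_i\Diamond\varphi$, which is not an accessibility formula, add $@_i\Diamond j$ and $@_j\varphi$ where $j$ is a nominal not occurring on the branch; this rule is applied at most once per formula, and only if $i$ is a quasi-urfather on the branch (defined below); [$\neg\Diamond$] from $@_i\neg\Diamond\varphi$ and $@_i\Diamond j$ add $@_j\neg\varphi$; [$\Box_{sym}$] from $@_i\Box\varphi$ and $@_j\Diamond i$ add $@_j\varphi$; [$@$] from $@_i@_j\varphi$ add $@_j\varphi$; [$\neg@$] from $@_i\neg@_j\varphi$ add $@_j\neg\varphi$; [$Id$] from $@_i\varphi$, which is not an accessibility formula, and $@_i j$ add $@_j\varphi$; [$Ref$] for any nominal $i$ occurring on the branch add $@_i i$; ($\mathcal{I}$) for any nominal $i$ occurring on the branch add $@_i\neg\Diamond i$. Auxiliary notions for a branch $\Theta$. $@_i\varphi$ is a quasi-subformula of $@_j\psi$ if $\varphi$ is a subformula of $\psi$, or $\varphi=\neg\chi$ with $\chi$ a subformula of $\psi$. For a nominal $i$ occurring in $\Theta$, $T^\Theta(i)=\{\varphi \mid @_i\varphi\in\Theta$ and $@_i\varphi$ is a quasi-subformula of the root formula$\}$. Nominals $i,j$ are twins if $T^\Theta(i)=T^\Theta(j)$. The generation relation: $i\prec_\Theta j$ if $j$ was introduced by applying $[\Diamond]$ to a formula $@_i\Diamond\varphi$ (equivalently, the accessibility formula $@_i\Diamond j$ is in $\Theta$); $\prec_\Theta^*$ is its reflexive transitive closure. A nominal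 $i$ is a quasi-urfather on $\Theta$ if there are no twins $j\neq k$ with $j\prec_\Theta^* i$ and $k\prec_\Theta^* i$. *)

From Stdlib Require Import List Relations.
Import ListNotations.

(* Prop and Nom are disjoint countably infinite sets: both indexed by nat,
   kept disjoint by the constructors. *)
Definition nom := nat.

Inductive form : Type :=
| PVar : nat -> form
| Nom  : nom -> form
| Neg  : form -> form
| And  : form -> form -> form
| Dia  : form -> form
| At   : nom -> form -> form.

Definition Box (f : form) : form := Neg (Dia (Neg f)).

(* A tableau node @_i phi is represented as the pair (i, phi). *)
Definition tform := (nom * form)%type.

Fixpoint noms (f : form) : list nom :=
  match f with
  | PVar _ => []
  | Nom i => [i]
  | Neg g => noms g
  | And g h => noms g ++ noms h
  | Dia g => noms g
  | At i g => i :: noms g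
  end.

Fixpoint subf (f g : form) : Prop :=
  f = g \/
  match g with
  | PVar _ | Nom _ => False
  | Neg h => subf f h
  | And h1 h2 => subf f h1 \/ subf f h2
  | Dia h => subf f h
  | At _ h => subf f h
  end.

(* State of a branch during its construction: the formulas on the branch,
   the accessibility formulas @_i <> j (recorded as pairs (i,j)) added by
   rule [Dia], and the formulas @_i <> phi to which [Dia] has been applied. *)
Record state : Type := mkState {
  fs : list tform;
  acc : list (nom * nom);
  dused : list tform
}.

Definition occurs (S : state) (i : nom) : Prop :=
  exists j f, In (j, f) (fs S) /\ (i = j \/ In i (noms f)).

Definition closed (S : state) : Prop :=
  exists i f, In (i, f) (fs S) /\ In (i, Neg f) (fs S).

Definition is_acc_formula (S : state) (t : tform) : Prop :=
  exists j, snd t = Dia (Nom j) /\ In (fst t, j) (acc S).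

Definition qsub (phi0 : form) (f : form) : Prop :=
  subf f phi0 \/ exists g, f = Neg g /\ subf g phi0.

(* twins: T(j) = T(k), with T(i) = { phi | @_i phi in S, quasi-subformula of root } *)
Definition twins (phi0 : form) (S : state) (j k : nom) : Prop :=
  occurs S j /\ occurs S k /\
  forall f, qsub phi0 f -> (In (j, f) (fs S) <-> In (k, f) (fs S)).

Definition gen_st (S : state) (i j : nom) : Prop := In (i, j) (acc S).

Definition quasi_urfather (phi0 : form) (S : state) (i : nom) : Prop :=
  ~ exists j k, j <> k /\ twins phi0 S j k /\
      clos_refl_trans nom (gen_st S) j i /\ clos_refl_trans nom (gen_st S) k i.

Definition add (S : state) (l : list tform) : state :=
  mkState (fs S ++ l) (acc S) (dused S).

Inductive rule_app (phi0 : form) (S : state) : state -> Prop :=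
| R_negneg i f : In (i, Neg (Neg f)) (fs S) -> rule_app phi0 S (add S [(i, f)])
| R_and i f g : In (i, And f g) (fs S) -> rule_app phi0 S (add S [(i, f); (i, g)])
| R_negand_l i f g : In (i, Neg (And f g)) (fs S) -> rule_app phi0 S (add S [(i, Neg f)])
| R_negand_r i f g : In (i, Neg (And f g)) (fs S) -> rule_app phi0 S (add S [(i, Neg g)])
| R_dia i f j :
    In (i, Dia f) (fs S) -> ~ is_acc_formula S (i, Dia f) ->
    ~ In (i, Dia f) (dused S) -> quasi_urfather phi0 S i -> ~ occurs S j ->
    rule_app phi0 S (mkState (fs S ++ [(i, Dia (Nom j)); (j, f)])
                             (acc S ++ [(i, j)]) (dused S ++ [(i, Dia f)]))
| R_negdia i f j : In (i, Neg (Dia f)) (fs S) -> In (i, Dia (Nom j)) (fs S) ->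
    rule_app phi0 S (add S [(j, Neg f)])
| R_boxsym i f j : In (i, Box f) (fs S) -> In (j, Dia (Nom i)) (fs S) ->
    rule_app phi0 S (add S [(j, f)])
| R_at i j f : In (i, At j f) (fs S) -> rule_app phi0 S (add S [(j, f)])
| R_negat i j f : In (i, Neg (At j f)) (fs S) -> rule_app phi0 S (add S [(j, Neg f)])
| R_id i f j : In (i, f) (fs S) -> ~ is_acc_formula S (i, f) -> In (i, Nom j) (fs S) ->
    rule_app phi0 S (add S [(j, f)])
| R_ref i : occurs S i -> rule_app phi0 S (add S [(i, Nom i)])
| R_irr i : occurs S i -> rule_app phi0 S (add S [(i, Neg (Dia (Nom i)))]).

Definition step (phi0 : form) (S S' : state) : Prop :=
  ~ closed S /\ rule_app phi0 S S' /\
  exists t, In t (fs S') /\ ~ In t (fs S).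

Definition init_state (i0 : nom) (phi0 : form) : state :=
  mkState [(i0, phi0)] [] [].

(* A branch of a tableau with root formula @_i0 phi0, given as the sequence of
   its construction stages: each stage extends the previous one by a legal
   rule application, and the branch only stops growing when no legal
   extension exists (maximality). Infinite branches are allowed. *)
Definition is_branch (i0 : nom) (phi0 : form) (th : nat -> state) : Prop :=
  th 0 = init_state i0 phi0 /\
  forall n, step phi0 (th n) (th (S n)) \/
            (th (S n) = th n /\ ~ exists S', step phi0 (th n) S').

Definition branch_noms (th : nat -> state) (i : nom) : Prop :=
  exists n, occurs (th n) i.

Definition gen (th : nat -> state) (i j : nom) : Prop :=
  exists n, In (i, j) (acc (th n)).

(* (N, R) is a finite set of well-founded, finitely branching trees:
   R relates elements of N, every node has at most one parent, R is
   well-founded (every node has finitely many ancestors), there are finitely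
   many roots (parentless nodes) and every node descends from one of them,
   and every node has finitely many children. *)
Definition finite_forest_wf_fb (N : nom -> Prop) (R : nom -> nom -> Prop) : Prop :=
  (forall i j, R i j -> N i /\ N j) /\
  (forall i j k, R j i -> R k i -> j = k) /\
  well_founded R /\
  (exists roots : list nom,
      (forall r, In r roots -> N r /\ forall j, ~ R j r) /\
      (forall i, N i -> exists r, In r roots /\ clos_refl_trans nom R r i)) /\
  (forall i, exists children : list nom, forall j, R i j -> In j children).

From Stdlib Require Import List Relations Lia Classical Arith.
Import ListNotations.

(* Every rule except [Dia] only adds formulas whose nominals already occur,
   while [Dia] records a link (i, j) with j fresh.  Hence every nominal has at
   most one parent, a parent occurs at an earlier stage than its children
   (well-foundedness), and the nominals that never receive a parent are those
   of the root formula @_i0 phi0, which are finitely many.  For finite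
   branching, an invariant shows that each formula on the branch is a
   quasi-subformula of phi0 or one of a few formulas built from nominals, so
   the children of i come from pairwise distinct premises @_i <>phi with <>phi
   a subformula of phi0: their number is bounded along the branch, hence it is
   eventually constant and no child appears afterwards. *)

Lemma NoDup_map_snd_fst_eq {A B : Type} (l : list (A * B)) a c b :
  NoDup (map snd l) -> In (a, b) l -> In (c, b) l -> a = c.
Proof.
  induction l as [|[x y] l IH]; simpl; [tauto|].
  intros Hnd Hab Hcb; inversion Hnd as [|? ? Hy Hnd']; subst.
  destruct Hab as [Hab|Hab], Hcb as [Hcb|Hcb]; [congruence| | |auto];
    exfalso; apply Hy.
  - injection Hab as -> ->; exact (in_map snd _ _ Hcb).
  - injection Hcb as -> ->; exact (in_map snd _ _ Hab).
Qed.

Lemma nat_fun_bounded_max (K : nat) (g : nat -> nat) :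
  (forall m, g m <= K) -> exists n, forall m, g m <= g n.
Proof.
  revert g; induction K as [|K IH]; intros g Hg.
  - exists 0; intros m; specialize (Hg m); lia.
  - destruct (classic (exists n, g n = S K)) as [[n Hn]|Hnone].
    + exists n; intros m; specialize (Hg m); lia.
    + apply IH; intros m; specialize (Hg m).
      assert (g m <> S K) by (intro; apply Hnone; eauto). lia.
Qed.

Lemma subf_refl f : subf f f.
Proof. destruct f; left; reflexivity. Qed.

Lemma subf_trans h : forall f g, subf f g -> subf g h -> subf f h.
Proof.
  induction h; intros f g Hfg [->|Hgh]; try exact Hfg; try contradiction;
    simpl; right; eauto.
  destruct Hgh; [left|right]; eauto.
Qed.

Ltac subf_down := eapply subf_trans; [|eassumption]; simpl; auto using subf_refl.

Lemma qsub_Neg p g : qsub p (Neg g) -> subf g p.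
Proof.
  intros [Hsub | [g' [[= ->] Hsub]]]; [subf_down | exact Hsub].
Qed.

Lemma qsub_subf p f : qsub p f -> (forall g, f <> Neg g) -> subf f p.
Proof. intros [Hsub | [g [E _]]] Hf; [exact Hsub | contradiction (Hf g E)]. Qed.

Fixpoint subfs (g : form) : list form :=
  g :: match g with
       | PVar _ | Nom _ => []
       | Neg h | Dia h | At _ h => subfs h
       | And h1 h2 => subfs h1 ++ subfs h2
       end.

Lemma subfs_complete g f : subf f g -> In f (subfs g).
Proof.
  induction g; simpl; intros [->|Hf]; auto; try contradiction.
  destruct Hf; right; apply in_or_app; auto.
Qed.

(* Besides quasi-subformulas of the root formula p, the branch only contains
   the formulas @_x k, @_x ~<>k and @_x ~k built by [Ref], (I) and [~<>] from
   nominals, and the accessibility formulas @_x <>k, recorded in A. *)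
Inductive shape (p : form) (A : list (nom * nom)) (x : nom) : form -> Prop :=
| shape_qsub f : qsub p f -> shape p A x f
| shape_Nom k : shape p A x (Nom k)
| shape_Neg_Nom k : shape p A x (Neg (Nom k))
| shape_irr k : shape p A x (Neg (Dia (Nom k)))
| shape_acc k : In (x, k) A -> shape p A x (Dia (Nom k)).

Lemma shape_incl p A A' x f : incl A A' -> shape p A x f -> shape p A' x f.
Proof. intros HA []; constructor; auto; apply HA; assumption. Qed.

Lemma shape_relabel p S x y f :
  shape p (acc S) x f -> ~ is_acc_formula S (x, f) -> shape p (acc S) y f.
Proof.
  intros Hs Hna; destruct Hs as [| | | |k Hk]; try (constructor; assumption).
  exfalso; apply Hna; exists k; auto.
Qed.

Lemma shape_Dia_subf p S x f :
  shape p (acc S) x (Dia f) -> ~ is_acc_formula S (x, Dia f) -> subf (Dia f) p.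
Proof.
  intros Hs Hna.
  inversion Hs as [? Hq | | | |k Hk]; subst.
  - destruct Hq as [Hsub | [? [E _]]]; [exact Hsub | discriminate].
  - exfalso; apply Hna; exists k; auto.
Qed.

Lemma occurs_intro S x f k : In (x, f) (fs S) -> In k (x :: noms f) -> occurs S k.
Proof. intros Hx [<-|Hk]; exists x, f; auto. Qed.

Lemma occurs_app S l A D k :
  occurs (mkState (fs S ++ l) A D) k ->
  occurs S k \/ exists x f, In (x, f) l /\ In k (x :: noms f).
Proof.
  intros (x & f & Hin & Hk); apply in_app_or in Hin as [Hin|Hin].
  - left; exists x, f; auto.
  - right; exists x, f; split; [exact Hin|destruct Hk; [left|right]; auto].
Qed.

Lemma occurs_after_dia S i f j A D k :
  In (i, Dia f) (fs S) ->
  occurs (mkState (fs S ++ [(i, Dia (Nom j)); (j, f)]) A D) k -> occurs S k \/ k = j.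
Proof.
  intros Hi Hk; destruct (occurs_app _ _ _ _ _ Hk) as [Hk'|(x & g & Hin & Hkx)];
    [left; exact Hk'|].
  destruct Hin as [[= <- <-]|[[= <- <-]|[]]]; simpl in Hkx.
  - destruct Hkx as [<-|[<-|[]]]; [left | right; reflexivity].
    apply (occurs_intro _ _ _ _ Hi); left; reflexivity.
  - destruct Hkx as [<-|Hkf]; [right; reflexivity | left].
    apply (occurs_intro _ _ _ _ Hi); right; exact Hkf.
Qed.

Definition admissible (p : form) (S : state) (t : tform) : Prop :=
  shape p (acc S) (fst t) (snd t) /\
  forall k, In k (fst t :: noms (snd t)) -> occurs S k.

Inductive expansion (p : form) (S : state) : state -> Prop :=
| expansion_add l : Forall (admissible p S) l -> expansion p S (add S l)
| expansion_dia i f j :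
    In (i, Dia f) (fs S) -> subf (Dia f) p -> ~ In (i, Dia f) (dused S) ->
    ~ occurs S j ->
    expansion p S (mkState (fs S ++ [(i, Dia (Nom j)); (j, f)])
                           (acc S ++ [(i, j)]) (dused S ++ [(i, Dia f)])).

Ltac premise_subf Hshape H :=
  let Hs := fresh "Hs" in
  pose proof (Hshape _ _ H) as Hs; inversion Hs as [? Hq | | | | ]; subst;
  first [ apply qsub_Neg in Hq | apply qsub_subf in Hq; [|discriminate] ].

Ltac new_formulas :=
  apply expansion_add; repeat apply Forall_cons; try apply Forall_nil; split; simpl.

Ltac occurs_from H :=
  try intros ? ?; apply (occurs_intro _ _ _ _ H); simpl in *;
  intuition auto using in_or_app.

Lemma rule_app_expansion p S S' :
  (forall x f, In (x, f) (fs S) -> shape p (acc S) x f) ->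
  rule_app p S S' -> expansion p S S'.
Proof.
  intros Hshape Hr.
  destruct Hr as [ i f H | i f g H | i f g H | i f g H | i f j H Hna Hnu _ Hj
                 | i f j H Hj | i f j H Hj | i j f H | i j f H | i f j H Hna Hj
                 | i Hi | i Hi ].
  - new_formulas; [premise_subf Hshape H; apply shape_qsub; left; subf_down
                 | occurs_from H].
  - new_formulas; try occurs_from H;
      premise_subf Hshape H; apply shape_qsub; left; subf_down.
  - new_formulas; [premise_subf Hshape H | occurs_from H].
    apply shape_qsub; right; exists f; split; [reflexivity | subf_down].
  - new_formulas; [premise_subf Hshape H | occurs_from H].
    apply shape_qsub; right; exists g; split; [reflexivity | subf_down].
  - apply expansion_dia; auto.
    exact (shape_Dia_subf _ _ _ _ (Hshape _ _ H) Hna).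
  - new_formulas.
    + pose proof (Hshape _ _ H) as Hs; inversion Hs as [? Hq | | | k | ]; subst.
      * apply qsub_Neg in Hq; apply shape_qsub; right; exists f; split; auto.
        subf_down.
      * apply shape_Neg_Nom.
    + intros k [<-|Hk]; [occurs_from Hj | occurs_from H].
  - unfold Box in H; new_formulas.
    + premise_subf Hshape H; apply shape_qsub; left; subf_down.
    + intros k [<-|Hk]; [occurs_from Hj | occurs_from H].
  - new_formulas; [premise_subf Hshape H | occurs_from H].
    apply shape_qsub; left; subf_down.
  - new_formulas; [premise_subf Hshape H | occurs_from H].
    apply shape_qsub; right; exists f; split; [reflexivity | subf_down].
  - new_formulas; [exact (shape_relabel _ _ _ _ _ (Hshape _ _ H) Hna) |].
    intros k [<-|Hk]; [occurs_from Hj | occurs_from H].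
  - new_formulas; [apply shape_Nom | intros k [<-|[<-|[]]]; exact Hi].
  - new_formulas; [apply shape_irr | intros k [<-|[<-|[]]]; exact Hi].
Qed.

Lemma expansion_extends p S S' :
  expansion p S S' -> exists e e', fs S' = fs S ++ e /\ acc S' = acc S ++ e'.
Proof.
  destruct 1; simpl; eexists _, _; split; try reflexivity.
  symmetry; apply app_nil_r.
Qed.

Lemma expansion_new_link p S S' i j :
  expansion p S S' -> In (i, j) (acc S') ->
  In (i, j) (acc S) \/ (~ occurs S j /\ occurs S i).
Proof.
  destruct 1 as [l _ | a f b Ha _ _ Hb]; simpl; [auto|].
  intros Hin; apply in_app_or in Hin as [Hin|[[= <- <-]|[]]]; [auto|].
  right; split; [exact Hb|]; apply (occurs_intro _ _ _ _ Ha); left; reflexivity.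
Qed.

(* [dused S] lists the premises of the [Dia] applications in the order of the
   links they created in [acc S]. *)
Record invariant {i0 : nom} {p : form} {S : state} : Prop := {
  inv_root : In (i0, p) (fs S);
  inv_shape : forall x f, In (x, f) (fs S) -> shape p (acc S) x f;
  inv_acc_fs : forall i j, In (i, j) (acc S) -> In (i, Dia (Nom j)) (fs S);
  inv_origin : forall k, occurs S k -> In k (i0 :: noms p) \/ exists i, In (i, k) (acc S);
  inv_acc_nodup : NoDup (map snd (acc S));
  inv_acc_not_root : forall i k, In (i, k) (acc S) -> ~ In k (i0 :: noms p);
  inv_dused_fst : map fst (dused S) = map fst (acc S);
  inv_dused_subf : forall x g, In (x, g) (dused S) -> exists f, g = Dia f /\ subf (Dia f) p;
  inv_dused_nodup : NoDup (dused S)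
}.
Arguments invariant : clear implicits.

Lemma acc_occurs i0 p S i j :
  invariant i0 p S -> In (i, j) (acc S) -> occurs S i /\ occurs S j.
Proof.
  intros HI Hij; pose proof (inv_acc_fs HI _ _ Hij) as Hfs.
  split; apply (occurs_intro _ _ _ _ Hfs); simpl; auto.
Qed.

Lemma invariant_init i0 p : invariant i0 p (init_state i0 p).
Proof.
  split; simpl; try tauto; try apply NoDup_nil.
  - intros x f [[= -> ->]|[]]; apply shape_qsub; left; apply subf_refl.
  - intros k (x & f & [[= <- <-]|[]] & Hk); left; destruct Hk; [left|right]; auto.
Qed.

Lemma invariant_add i0 p S l :
  invariant i0 p S -> Forall (admissible p S) l -> invariant i0 p (add S l).
Proof.
  intros HI Hl; rewrite Forall_forall in Hl.
  split; simpl; try apply HI.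
  - apply in_or_app; left; apply HI.
  - intros x f Hin; apply in_app_or in Hin as [Hin|Hin]; [apply HI, Hin | apply (Hl _ Hin)].
  - intros i j Hij; apply in_or_app; left; apply HI, Hij.
  - intros k Hk; apply (inv_origin HI).
    destruct (occurs_app _ _ _ _ _ Hk) as [Hk'|(x & f & Hin & Hk')]; [exact Hk'|].
    exact (proj2 (Hl _ Hin) _ Hk').
Qed.

Lemma invariant_dia i0 p S i f j :
  invariant i0 p S -> In (i, Dia f) (fs S) -> subf (Dia f) p ->
  ~ In (i, Dia f) (dused S) -> ~ occurs S j ->
  invariant i0 p (mkState (fs S ++ [(i, Dia (Nom j)); (j, f)])
                          (acc S ++ [(i, j)]) (dused S ++ [(i, Dia f)])).
Proof.
  intros HI Hi Hsub Hnu Hj.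
  assert (Hj_acc : ~ In j (map snd (acc S))).
  { intros Hin; apply in_map_iff in Hin as ([x j'] & <- & Hin).
    exact (Hj (proj2 (acc_occurs _ _ _ _ _ HI Hin))). }
  split; simpl.
  - apply in_or_app; left; apply HI.
  - intros x g Hin; apply in_app_or in Hin as [Hin|[[= <- <-]|[[= <- <-]|[]]]].
    + apply shape_incl with (A := acc S); [apply incl_appl, incl_refl | apply HI, Hin].
    + apply shape_acc, in_or_app; right; left; reflexivity.
    + apply shape_qsub; left; subf_down.
  - intros a b Hin; apply in_or_app; apply in_app_or in Hin as [Hin|[[= <- <-]|[]]].
    + left; apply HI, Hin.
    + right; left; reflexivity.
  - intros k Hk; destruct (occurs_after_dia _ _ _ _ _ _ _ Hi Hk) as [Hk' | ->].
    + destruct (inv_origin HI _ Hk') as [Hroot | [x Hx]]; [left; exact Hroot|].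
      right; exists x; apply in_or_app; left; exact Hx.
    + right; exists i; apply in_or_app; right; left; reflexivity.
  - rewrite map_app; apply NoDup_app; [apply HI | repeat constructor; auto |].
    intros a Ha [<-|[]]; contradiction.
  - intros a b Hin; apply in_app_or in Hin as [Hin|[[= <- <-]|[]]].
    + exact (inv_acc_not_root HI _ _ Hin).
    + intros Hroot; apply Hj, (occurs_intro _ _ _ _ (inv_root HI)), Hroot.
  - rewrite !map_app; f_equal; apply HI.
  - intros x g Hin; apply in_app_or in Hin as [Hin|[[= <- <-]|[]]];
      [apply (inv_dused_subf HI _ _ Hin) | eauto].
  - apply NoDup_app; [apply HI | repeat constructor; auto |].
    intros a Ha [<-|[]]; contradiction.
Qed.

Definition nb_children (A : list (nom * nom)) (i : nom) : nat :=
  length (filter (fun k : nom => Nat.eqb i k) (map fst A)).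

Lemma nb_children_app_lt A e i j :
  In (i, j) e -> nb_children A i < nb_children (A ++ e) i.
Proof.
  intros Hin; unfold nb_children; rewrite map_app, filter_app, length_app.
  assert (Hi : In i (filter (fun k : nom => Nat.eqb i k) (map fst e))).
  { apply filter_In; split; [exact (in_map fst _ _ Hin) | apply Nat.eqb_refl]. }
  destruct (filter _ (map fst e)); [destruct Hi | simpl; lia].
Qed.

Lemma nb_children_bound i0 p S i :
  invariant i0 p S -> nb_children (acc S) i <= length (subfs p).
Proof.
  intros HI; unfold nb_children.
  rewrite <- (inv_dused_fst HI), filter_map_swap, length_map.
  rewrite <- (length_map (pair i) (subfs p)).
  apply NoDup_incl_length; [apply NoDup_filter, HI|].
  intros [x g] Hin; apply filter_In in Hin as [Hin Hx].
  apply Nat.eqb_eq in Hx; simpl in Hx; subst x.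
  destruct (inv_dused_subf HI _ _ Hin) as (f & -> & Hf).
  apply in_map, subfs_complete, Hf.
Qed.

Section Branch.

Variables (i0 : nom) (p : form) (th : nat -> state).
Hypothesis Hbranch : is_branch i0 p th.

Lemma branch_rule_app n : th (S n) = th n \/ rule_app p (th n) (th (S n)).
Proof.
  destruct Hbranch as [_ Hstep].
  destruct (Hstep n) as [(_ & Hr & _) | [E _]]; auto.
Qed.

Lemma branch_invariant n : invariant i0 p (th n).
Proof.
  induction n as [|n IH].
  - destruct Hbranch as [-> _]; apply invariant_init.
  - destruct (branch_rule_app n) as [-> | Hr]; [exact IH|].
    destruct (rule_app_expansion _ _ _ (inv_shape IH) Hr);
      [apply invariant_add | apply invariant_dia]; auto.
Qed.

Lemma branch_expansion n : th (S n) = th n \/ expansion p (th n) (th (S n)).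
Proof.
  destruct (branch_rule_app n) as [E | Hr]; [left; exact E | right].
  exact (rule_app_expansion _ _ _ (inv_shape (branch_invariant n)) Hr).
Qed.

Lemma branch_extends n m :
  n <= m -> exists e e', fs (th m) = fs (th n) ++ e /\ acc (th m) = acc (th n) ++ e'.
Proof.
  induction 1 as [|m _ (e & e' & Hfs & Hacc)].
  - exists [], []; rewrite !app_nil_r; auto.
  - destruct (branch_expansion m) as [-> | Hexp]; [eauto|].
    destruct (expansion_extends _ _ _ Hexp) as (d & d' & -> & ->).
    exists (e ++ d), (e' ++ d'); rewrite Hfs, Hacc, !app_assoc; auto.
Qed.

Lemma acc_mono n m ij : n <= m -> In ij (acc (th n)) -> In ij (acc (th m)).
Proof.
  intros Hnm Hin; destruct (branch_extends _ _ Hnm) as (_ & e & _ & ->).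
  apply in_or_app; left; exact Hin.
Qed.

Lemma occurs_mono n m k : n <= m -> occurs (th n) k -> occurs (th m) k.
Proof.
  intros Hnm (x & f & Hin & Hk); destruct (branch_extends _ _ Hnm) as (e & _ & Hfs & _).
  exists x, f; rewrite Hfs; split; [apply in_or_app; left; exact Hin | exact Hk].
Qed.

Lemma branch_new_link n i j :
  In (i, j) (acc (th (S n))) ->
  In (i, j) (acc (th n)) \/ (~ occurs (th n) j /\ occurs (th n) i).
Proof.
  destruct (branch_expansion n) as [-> | Hexp]; [auto|].
  exact (expansion_new_link _ _ _ _ _ Hexp).
Qed.

Lemma acc_link_of_occurs n m i j :
  occurs (th n) j -> In (i, j) (acc (th m)) -> In (i, j) (acc (th n)).
Proof.
  intros Hj; induction m as [|m IH]; intros Hm.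
  - destruct Hbranch as [H0 _]; rewrite H0 in Hm; contradiction.
  - destruct (Nat.le_gt_cases (S m) n) as [Hle|Hlt]; [exact (acc_mono _ _ _ Hle Hm)|].
    destruct (branch_new_link _ _ _ Hm) as [Hold | [Hfresh _]]; [exact (IH Hold)|].
    contradiction (Hfresh (occurs_mono n m j ltac:(lia) Hj)).
Qed.

Lemma occurs_Acc n : forall j, occurs (th n) j -> Acc (gen th) j.
Proof.
  induction n as [|n IH]; intros j Hj; constructor; intros i [m Hm];
    apply (acc_link_of_occurs _ _ _ _ Hj) in Hm.
  - destruct Hbranch as [H0 _]; rewrite H0 in Hm; contradiction.
  - apply IH; destruct (branch_new_link _ _ _ Hm) as [Hold | [_ Hi]]; [|exact Hi].
    exact (proj1 (acc_occurs _ _ _ _ _ (branch_invariant n) Hold)).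
Qed.

Lemma gen_branch_noms i j : gen th i j -> branch_noms th i /\ branch_noms th j.
Proof.
  intros [n Hn]; destruct (acc_occurs _ _ _ _ _ (branch_invariant n) Hn).
  split; exists n; assumption.
Qed.

Lemma gen_wf : well_founded (gen th).
Proof.
  intros j; constructor; intros i Hij.
  destruct (gen_branch_noms _ _ Hij) as [[n Hi] _]; exact (occurs_Acc n i Hi).
Qed.

Lemma gen_parent_unique i j k : gen th j i -> gen th k i -> j = k.
Proof.
  intros [n Hn] [m Hm].
  apply (NoDup_map_snd_fst_eq _ _ _ i (inv_acc_nodup (branch_invariant (max n m))));
    [apply (acc_mono n) | apply (acc_mono m)]; auto; lia.
Qed.

Lemma root_noms_branch_noms r : In r (i0 :: noms p) -> branch_noms th r.
Proof.
  intros Hr; exists 0; exact (occurs_intro _ _ _ _ (inv_root (branch_invariant 0)) Hr).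
Qed.

Lemma root_noms_parentless r : In r (i0 :: noms p) -> forall j, ~ gen th j r.
Proof. intros Hr j [n Hn]; exact (inv_acc_not_root (branch_invariant n) _ _ Hn Hr). Qed.

Lemma descends_from_root_noms i :
  branch_noms th i -> exists r, In r (i0 :: noms p) /\ clos_refl_trans nom (gen th) r i.
Proof.
  induction i as [i IH] using (well_founded_ind gen_wf); intros [n Hn].
  destruct (inv_origin (branch_invariant n) _ Hn) as [Hr | [a Ha]].
  - exists i; split; [exact Hr | apply rt_refl].
  - assert (Hai : gen th a i) by (exists n; exact Ha).
    destruct (IH a Hai (proj1 (gen_branch_noms _ _ Hai))) as (r & Hr & Hra).
    exists r; split; [exact Hr|]; apply rt_trans with a; [exact Hra | apply rt_step, Hai].
Qed.

Lemma gen_finitely_branching i : exists children, forall j, gen th i j -> In j children.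
Proof.
  destruct (nat_fun_bounded_max (length (subfs p)) (fun m => nb_children (acc (th m)) i))
    as [n Hmax].
  { intros m; exact (nb_children_bound _ _ _ i (branch_invariant m)). }
  exists (map snd (acc (th n))); intros j [m Hm].
  destruct (branch_extends n (max n m)) as (_ & e & _ & He); [lia|].
  assert (Hij : In (i, j) (acc (th n) ++ e))
    by (rewrite <- He; apply (acc_mono m); [lia | exact Hm]).
  apply in_app_or in Hij as [Hij|Hij]; [exact (in_map snd _ _ Hij)|].
  specialize (Hmax (max n m)); simpl in Hmax; rewrite He in Hmax.
  pose proof (nb_children_app_lt (acc (th n)) _ _ _ Hij); lia.
Qed.

End Branch.

Theorem lemma3 (i0 : nom) (phi0 : form) (th : nat -> state) :
  ~ In i0 (noms phi0) ->
  is_branch i0 phi0 th ->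
  finite_forest_wf_fb (branch_noms th) (gen th).
Proof.
  intros _ Hb.
  split; [exact (gen_branch_noms _ _ _ Hb)|].
  split; [exact (gen_parent_unique _ _ _ Hb)|].
  split; [exact (gen_wf _ _ _ Hb)|].
  split; [|exact (gen_finitely_branching _ _ _ Hb)].
  exists (i0 :: noms phi0); split.
  - intros r Hr; split; [exact (root_noms_branch_noms _ _ _ Hb _ Hr)|].
    exact (root_noms_parentless _ _ _ Hb _ Hr).
  - exact (descends_from_root_noms _ _ _ Hb).
Qed.
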